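(* There exists an edge-coloring of the complete graph on a countably infinite vertex set which contains a rainbow $k$-cycle for every integer $k \ge 3$ with $k \not\equiv 2 \pmod 4$, and contains no rainbow $k$-cycle for any $k \equiv 2 \pmod 4$. Moreover, for every $n$ there is a finite complete graph (an induced subgraph of this one, with the induced coloring) whose coloring contains a rainbow $k$-cycle for every $3 \le k \le n$ with $k \not\equiv 2 \pmod 4$, and contains no rainbow cycle of any length $\equiv 2 \pmod 4$.
   Context: A coloring is an arbitrary (not necessarily proper) assignment of colors, from an arbitrary set, to the edges of an undirected complete graph. A rainbow $k$-cycle is a cycle through $k$ distinct vertices whose $k$ edges all receive pairwise distinct colors. *)

From Stdlib Require Import Arith List.
Import ListNotations.

Definition rainbow_cycle {V C : Type} (P : V -> Prop) (c : V -> V -> C) (k : nat) : Prop :=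
  3 <= k /\
  exists v : nat -> V,
    (forall i, i < k -> P (v i)) /\
    (forall i j, i < k -> j < k -> i <> j -> v i <> v j) /\
    (forall i j, i < k -> j < k -> i <> j ->
       c (v i) (v ((i + 1) mod k)) <> c (v j) (v ((j + 1) mod k))).

(* Color an edge {a, b} joining an even vertex a to an odd vertex b by the pair
   (a, b mod 4), and give all edges inside the even or inside the odd vertices
   one common extra color.

   In a rainbow cycle at most one edge is of the extra color; since the number
   of parity changes around a cycle is even, a cycle of even length then
   alternates between even and odd vertices. The two edges at an even vertex
   get distinct colors, so its two odd neighbours differ mod 4, i.e. the odd
   vertices of the cycle alternate between the residues 1 and 3. That is
   impossible when the cycle has an odd number k/2 of odd vertices.

   Conversely the cycle 0, 1, ..., k-1 is rainbow unless k = 2 mod 4: its path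
   edges get pairwise distinct colors, and the closing edge {k-1, 0} has the
   extra color for odd k and the color (0, 3) for k = 0 mod 4. *)

From Stdlib Require Import Arith List Lia ZArith ZifyNat.

Ltac lia_mod := zify; Z.to_euclidean_division_equations; lia.

(* keeps [injection] from unfolding [x mod 4] into [Nat.divmod] matches *)
Local Arguments Nat.modulo : simpl never.

Lemma even_mod2 x : Nat.even x = (x mod 2 =? 0).
Proof.
  rewrite (Nat.div_mod_eq x 2) at 1.
  rewrite Nat.add_comm, Nat.even_add_mul_2.
  pose proof (Nat.mod_upper_bound x 2 ltac:(lia)).
  destruct (x mod 2) as [|[|r]]; auto; lia.
Qed.

Lemma mod_neq_of_lt_lt_add i j k : i < j < i + k -> i mod k <> j mod k.
Proof.
  intros Hij Heq.
  pose proof (Nat.div_mod_eq i k); pose proof (Nat.div_mod_eq j k).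
  assert (i / k < j / k) by nia.
  nia.
Qed.

Lemma alternating_even_period (f : nat -> bool) n :
  (forall m, m < n -> f (S m) = negb (f m)) -> f n = f 0 -> Nat.even n = true.
Proof.
  intros Halt Hret.
  assert (Hf : forall m, m <= n -> f m = if Nat.even m then f 0 else negb (f 0)).
  { induction m as [|m IH]; intros Hm; [reflexivity|].
    rewrite Halt, IH, Nat.even_succ, <- Nat.negb_even by lia.
    destruct (Nat.even m), (f 0); reflexivity. }
  rewrite Hf in Hret by lia.
  destruct (Nat.even n), (f 0); easy.
Qed.

Lemma rainbow_cycle_mono {V C : Type} (P Q : V -> Prop) (c : V -> V -> C) k :
  (forall x, P x -> Q x) -> rainbow_cycle P c k -> rainbow_cycle Q c k.
Proof.
  intros HPQ [Hk [v [HP Hrest]]].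
  split; [exact Hk|]. exists v. split; auto.
Qed.

Definition col (x y : nat) : option (nat * nat) :=
  match Nat.even x, Nat.even y with
  | true, false => Some (x, y mod 4)
  | false, true => Some (y, x mod 4)
  | _, _ => None
  end.

Lemma col_sym x y : col x y = col y x.
Proof. unfold col. destruct (Nat.even x), (Nat.even y); reflexivity. Qed.

Lemma col_eq_None x y : col x y = None <-> Nat.even x = Nat.even y.
Proof. unfold col. destruct (Nat.even x), (Nat.even y); easy. Qed.

Lemma col_even_odd a b :
  Nat.even a = true -> Nat.even b = false -> col a b = Some (a, b mod 4).
Proof. unfold col. intros -> ->. reflexivity. Qed.

Lemma col_succ i :
  col i (i + 1) = if Nat.even i then Some (i, (i + 1) mod 4) else Some (i + 1, i mod 4).
Proof.
  unfold col. rewrite Nat.add_1_r, Nat.even_succ, <- Nat.negb_even.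
  destruct (Nat.even i); reflexivity.
Qed.

Lemma col_succ_inj i j : col i (i + 1) = col j (j + 1) -> i = j.
Proof.
  rewrite !col_succ, !even_mod2.
  destruct (Nat.eqb_spec (i mod 2) 0), (Nat.eqb_spec (j mod 2) 0);
    intros [= Ha Hb]; lia_mod.
Qed.

Lemma col_closing_edge k j :
  k mod 4 <> 2 -> j + 1 < k -> col (k - 1) 0 <> col j (j + 1).
Proof.
  intros Hk Hj.
  rewrite col_sym, col_succ. unfold col at 1. cbn [Nat.even].
  rewrite !even_mod2.
  destruct (Nat.eqb_spec ((k - 1) mod 2) 0), (Nat.eqb_spec (j mod 2) 0);
    intros E; try discriminate E; injection E as Ha Hb; lia_mod.
Qed.

Lemma rainbow_cycle_initial_segment k :
  3 <= k -> k mod 4 <> 2 -> rainbow_cycle (fun x => x < k) col k.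
Proof.
  intros Hk3 Hk.
  assert (Hnext : forall i, i < k -> (i + 1) mod k = if i + 1 =? k then 0 else i + 1).
  { intros i Hi. destruct (Nat.eqb_spec (i + 1) k) as [->|].
    - apply Nat.Div0.mod_same.
    - apply Nat.mod_small. lia. }
  split; [exact Hk3|]. exists (fun i => i).
  split; [auto|]. split; [auto|].
  intros i j Hi Hj Hij. rewrite (Hnext i Hi), (Hnext j Hj).
  destruct (Nat.eqb_spec (i + 1) k), (Nat.eqb_spec (j + 1) k); try lia.
  - replace i with (k - 1) by lia. apply col_closing_edge; lia.
  - replace j with (k - 1) by lia. apply not_eq_sym, col_closing_edge; lia.
  - intros E. exact (Hij (col_succ_inj i j E)).
Qed.

Section RainbowClosedWalk.

Variables (w : nat -> nat) (k : nat).
Hypothesis k_mod4 : k mod 4 = 2.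
Hypothesis w_periodic : forall j, w (j + k) = w j.
Hypothesis w_rainbow :
  forall i j, i < j < i + k -> col (w i) (w (i + 1)) <> col (w j) (w (j + 1)).

Lemma rainbow_walk_alternates j : Nat.even (w (j + 1)) = negb (Nat.even (w j)).
Proof.
  destruct (Bool.bool_dec (Nat.even (w j)) (Nat.even (w (j + 1)))) as [Hsame|];
    [exfalso | destruct (Nat.even (w j)), (Nat.even (w (j + 1))); easy].
  (* edge j has the extra color, so the other k - 1 edges of its window do not *)
  assert (Hcross : forall m, m < k - 1 ->
            Nat.even (w (j + 1 + S m)) = negb (Nat.even (w (j + 1 + m)))).
  { intros m Hm.
    assert (Hne : col (w (j + 1 + m)) (w (j + 1 + m + 1)) <> None).
    { apply col_eq_None in Hsame. rewrite <- Hsame.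
      apply not_eq_sym, w_rainbow. lia. }
    rewrite col_eq_None in Hne. replace (j + 1 + S m) with (j + 1 + m + 1) by lia.
    destruct (Nat.even (w (j + 1 + m))), (Nat.even (w (j + 1 + m + 1))); easy. }
  assert (Hodd : Nat.even (k - 1) = true).
  { apply (alternating_even_period (fun m => Nat.even (w (j + 1 + m)))); [exact Hcross|].
    replace (j + 1 + (k - 1)) with (j + k) by lia.
    rewrite w_periodic, Nat.add_0_r. exact Hsame. }
  rewrite even_mod2 in Hodd. apply Nat.eqb_eq in Hodd. lia_mod.
Qed.

Lemma rainbow_walk_odd_step j :
  Nat.even (w j) = false ->
  Nat.even (w (j + 2)) = false /\ (w (j + 2) mod 4 =? 1) = negb (w j mod 4 =? 1).
Proof.
  intros Hj.
  assert (Hmid : Nat.even (w (j + 1)) = true).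
  { rewrite rainbow_walk_alternates, Hj. reflexivity. }
  assert (Hnext : Nat.even (w (j + 2)) = false).
  { replace (j + 2) with (j + 1 + 1) by lia. rewrite rainbow_walk_alternates, Hmid. reflexivity. }
  split; [exact Hnext|].
  assert (Hcol : col (w j) (w (j + 1)) <> col (w (j + 1)) (w (j + 1 + 1))) by (apply w_rainbow; lia).
  replace (j + 1 + 1) with (j + 2) in Hcol by lia.
  rewrite col_sym, !col_even_odd in Hcol by assumption.
  assert (Hres : w j mod 4 <> w (j + 2) mod 4) by congruence.
  rewrite even_mod2 in Hj, Hnext. apply Nat.eqb_neq in Hj, Hnext.
  destruct (Nat.eqb_spec (w j mod 4) 1), (Nat.eqb_spec (w (j + 2) mod 4) 1); simpl; lia_mod.
Qed.

Lemma no_rainbow_closed_walk : False.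
Proof.
  assert (Hs : exists s, Nat.even (w s) = false).
  { destruct (Nat.even (w 0)) eqn:E; [exists 1 | exists 0]; auto.
    pose proof (rainbow_walk_alternates 0) as Halt. rewrite E in Halt. exact Halt. }
  destruct Hs as [s Hs].
  assert (Hodd : forall m, Nat.even (w (s + 2 * m)) = false).
  { induction m as [|m IH]; [rewrite Nat.add_0_r; exact Hs|].
    replace (s + 2 * S m) with (s + 2 * m + 2) by lia.
    exact (proj1 (rainbow_walk_odd_step _ IH)). }
  assert (Heven : Nat.even (k / 2) = true).
  { apply (alternating_even_period (fun m => w (s + 2 * m) mod 4 =? 1)).
    - intros m _. replace (s + 2 * S m) with (s + 2 * m + 2) by lia.
      exact (proj2 (rainbow_walk_odd_step _ (Hodd m))).
    - replace (s + 2 * (k / 2)) with (s + k) by lia_mod.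
      rewrite w_periodic, Nat.add_0_r. reflexivity. }
  rewrite even_mod2 in Heven. apply Nat.eqb_eq in Heven. lia_mod.
Qed.

End RainbowClosedWalk.

Lemma no_rainbow_cycle_mod4 (P : nat -> Prop) k : k mod 4 = 2 -> ~ rainbow_cycle P col k.
Proof.
  intros Hk [_ [v [_ [_ Hv]]]].
  assert (Hk0 : k <> 0) by lia.
  apply (no_rainbow_closed_walk (fun j => v (j mod k)) k Hk).
  - intros j. cbv beta. replace (j + k) with (j + 1 * k) by lia.
    rewrite Nat.Div0.mod_add. reflexivity.
  - intros i j Hij. cbv beta. rewrite <- (Nat.Div0.add_mod_idemp_l i), <- (Nat.Div0.add_mod_idemp_l j).
    apply Hv; try (apply Nat.mod_upper_bound; exact Hk0).
    apply mod_neq_of_lt_lt_add. exact Hij.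
Qed.

Theorem claim7 :
  exists (C : Type) (c : nat -> nat -> C),
    (forall x y, c x y = c y x) /\
    (forall k, 3 <= k -> k mod 4 <> 2 -> rainbow_cycle (fun _ => True) c k) /\
    (forall k, k mod 4 = 2 -> ~ rainbow_cycle (fun _ => True) c k) /\
    (forall n, exists S : list nat,
        (forall k, 3 <= k -> k <= n -> k mod 4 <> 2 ->
           rainbow_cycle (fun x => In x S) c k) /\
        (forall k, k mod 4 = 2 -> ~ rainbow_cycle (fun x => In x S) c k)).
Proof.
  exists (option (nat * nat)), col.
  split; [exact col_sym|].
  split.
  { intros k Hk3 Hk. apply (rainbow_cycle_mono (fun x => x < k)); auto.
    apply rainbow_cycle_initial_segment; assumption. }
  split; [intros k; apply no_rainbow_cycle_mod4|].
  intros n. exists (seq 0 n). split.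
  - intros k Hk3 Hkn Hk. apply (rainbow_cycle_mono (fun x => x < k)).
    + intros x Hx. apply in_seq. lia.
    + apply rainbow_cycle_initial_segment; assumption.
  - intros k. apply no_rainbow_cycle_mod4.
Qed.
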